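(* Let $\alpha\ge1$, let $n,m,k$ be integers with $2\le m\le k<n$, and let $\mathcal{A}$ be any single-pass streaming algorithm with memory $m$. Then for all sufficiently large $T$, there is an instance $\nu\in\mathcal{I}\cup\mathcal{I}'$ (defined in the context, with $\varepsilon=\frac14(k/T)^{\frac{1}{2+2\alpha}}$) on which $$\mathbb{E}_\nu[R(T)] > \frac{2}{16^{\alpha+1}}\cdot\frac{(k-m+1)\,T^{\frac{1}{\alpha+1}}}{k^{1+\frac{1}{\alpha+1}}}\sum_{i:\Delta_i(\nu)>0}\Delta_i(\nu)^{1-2\alpha}.$$ In particular the expected regret of $\mathcal{A}$ on some instance of this family is $\Omega\!\left(16^{-\alpha}\frac{(k-m+1)T^{\frac{1}{\alpha+1}}}{k^{1+\frac{1}{\alpha+1}}}\sum_{i:\Delta_i>0}\Delta_i^{1-2\alpha}\right)$.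
   Context: Streaming stochastic multi-armed bandit: $n$ arms arrive one by one in a stream; arm $i$ has Bernoulli rewards with mean $\mu_i$. At most $m$ arms can be stored in memory; in each of $T$ rounds the player may discard stored arms and read next arms from the stream, then pulls exactly one stored arm $A_t$; discarded or passed-over arms cannot be pulled again. $\Delta_i=\mu_*-\mu_i$ where $\mu_*=\max_j\mu_j$, and $\mathbb{E}_\nu[R(T)]=\mathbb{E}_\nu[\sum_{t=1}^T(\mu_*-\mu_{A_t})]$ when the algorithm runs on instance $\nu$. Hard instances: let $\varepsilon=\frac14\left(\frac{k}{T}\right)^{\frac{1}{2+2\alpha}}$, arms arriving in the stream in order $1,2,\dots,n$. $\nu_1$ has arm 1 with mean $\frac12+n\varepsilon$, arms $2,\dots,k$ with mean $\frac12+(n-1)\varepsilon$, and arms $k+1,\dots,n$ with mean $\frac12$. For $2\le i\le k$, $\nu_i$ equals $\nu_1$ except that arm $i$ has mean $\frac12+(n+1)\varepsilon$. $\mathcal{I}=\{\nu_1,\dots,\nu_k\}$. For each $i\in[k]$, $\nu_i'$ equals $\nu_i$ except that arms $k+1,\dots,n$ have mean $1$; $\mathcal{I}'=\{\nu_1',\dots,\nu_k'\}$. *)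

From Stdlib Require Import Reals List Lia Lra.
Import ListNotations.
Open Scope R_scope.

(** Arms are numbered 1..n and arrive in the stream in this order.
    The algorithm's state is (M, p): M = list of stored arms, p = index of
    the next unread arm in the stream (arms < p were read, stored or passed). *)

Record action := mkAction {
  act_mem : list nat;   (* memory after discarding / reading in this round *)
  act_ptr : nat;        (* next unread arm of the stream after this round *)
  act_pull : nat
}.

Definition state := (list nat * nat)%type.

Definition init_state : state := ([], 1%nat).

(** In a round the player may discard stored arms and read the next arms
    p, p+1, ..., q-1 from the stream (storing some of them, never exceeding
    memory m), then pulls one stored arm. *)
Definition valid_action (n m : nat) (s : state) (a : action) : Prop :=
  let (M, p) := s in
  (p <= act_ptr a <= S n)%nat /\
  NoDup (act_mem a) /\
  (length (act_mem a) <= m)%nat /\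
  (forall x, In x (act_mem a) ->
      In x M \/ (p <= x /\ x < act_ptr a)%nat) /\
  In (act_pull a) (act_mem a).

(** A history: the chronological list of (action, observed reward). *)
Definition history := list (action * bool).

Definition state_of (h : history) : state :=
  fold_left (fun _ ab => (act_mem (fst ab), act_ptr (fst ab))) h init_state.

Inductive hist_valid (n m : nat) : history -> Prop :=
| hv_nil : hist_valid n m []
| hv_snoc : forall h a b,
    hist_valid n m h -> valid_action n m (state_of h) a ->
    hist_valid n m (h ++ [(a, b)]).

Definition dist := list (R * action).

Definition dist_ok (d : dist) : Prop :=
  (forall w a, In (w, a) d -> 0 <= w) /\
  fold_right (fun wa acc => fst wa + acc) 0 d = 1.

(** A (possibly randomized) algorithm: given the horizon T and the history,
    a distribution over the next action. *)
Definition algorithm := nat -> history -> dist.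

Definition is_streaming_alg (n m : nat) (A : algorithm) : Prop :=
  forall T h, hist_valid n m h ->
    dist_ok (A T h) /\
    (forall w a, In (w, a) (A T h) -> valid_action n m (state_of h) a).

(** Instance = vector of Bernoulli means mu : nat -> R (arms 1..n). *)
Definition mu_star (n : nat) (mu : nat -> R) : R :=
  fold_right Rmax (mu 1%nat) (map mu (seq 1 n)).

Definition gap (n : nat) (mu : nat -> R) (i : nat) : R := mu_star n mu - mu i.

(** Expected remaining regret over s rounds from history h, when rewards of
    arm i are Bernoulli(mu i). *)
Fixpoint exp_regret_from (A : algorithm) (T : nat) (mu : nat -> R) (ms : R)
    (s : nat) (h : history) {struct s} : R :=
  match s with
  | O => 0
  | S s' =>
      fold_right
        (fun wa acc =>
           let w := fst wa in let a := snd wa in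
           let q := mu (act_pull a) in
           acc + w * ((ms - q)
                      + q * exp_regret_from A T mu ms s' (h ++ [(a, true)])
                      + (1 - q) * exp_regret_from A T mu ms s' (h ++ [(a, false)])))
        0 (A T h)
  end.

Definition exp_regret (n : nat) (A : algorithm) (T : nat) (mu : nat -> R) : R :=
  exp_regret_from A T mu (mu_star n mu) T [].

Definition sum_gap_pow (n : nat) (mu : nat -> R) (alpha : R) : R :=
  fold_right
    (fun i acc =>
       (if Rlt_dec 0 (gap n mu i) then Rpower (gap n mu i) (1 - 2 * alpha) else 0)
       + acc)
    0 (seq 1 n).

Definition eps (k T : nat) (alpha : R) : R :=
  / 4 * Rpower (INR k / INR T) (1 / (2 + 2 * alpha)).

(** Hard instances. [hard_mean n k e j primed] is the mean vector of nu_j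
    (primed = false) or nu_j' (primed = true), for 1 <= j <= k. *)
Definition hard_mean (n k : nat) (e : R) (j : nat) (primed : bool) (i : nat) : R :=
  if (andb (Nat.leb 2 j) (Nat.eqb i j)) then / 2 + INR (S n) * e
  else if Nat.eqb i 1 then / 2 + INR n * e
  else if Nat.leb i k then / 2 + INR (n - 1) * e
  else if primed then 1 else / 2.

From Pilot Require Import Defs.
From Stdlib Require Import Reals List Bool Arith Lia Lra.
Import ListNotations.
Open Scope R_scope.

(* Let [S] be the expected number of pulls of the arms [1..k] made under
   [nu_1] before the algorithm first pulls an arm beyond [k].  If [S] is
   large, the same pulls happen under [nu_1'] (the two instances agree on
   [1..k]), where each of them costs regret about [1/2].  If [S] is small, by
   Markov's inequality the algorithm reaches the arms beyond [k] within the
   first [T/2] rounds with high probability, and at that moment its memory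
   holds at most [m - 1] of the arms [1..k]: each of the others is lost for
   good.  A change of measure (divergence decomposition and the Hellinger
   bound) transfers this to [nu_j], where arm [j] is the unique best arm, so
   for some [j] the algorithm loses the best arm early with probability of
   order [(k-m+1)/k] and then pays [eps] per remaining round.  The choice of
   [eps] balances the two cases against the stated bound. *)
Definition expect (d : Defs.dist) (X : action -> R) : R :=
  fold_right (fun wa acc => acc + fst wa * X (snd wa)) 0 d.

Lemma expect_ext d X Y :
  (forall w a, In (w, a) d -> X a = Y a) -> expect d X = expect d Y.
Proof.
  induction d as [|[w a] d IH]; intros H; simpl; [reflexivity|].
  rewrite (H w a) by (simpl; auto).
  rewrite IH by (intros w' a' Hin; apply (H w'); simpl; auto). reflexivity.
Qed.

Lemma expect_add d X Y : expect d (fun a => X a + Y a) = expect d X + expect d Y.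
Proof. induction d as [|wa d IH]; simpl; [lra|]. rewrite IH. ring. Qed.

Lemma expect_scal d c X : expect d (fun a => c * X a) = c * expect d X.
Proof. induction d as [|wa d IH]; simpl; [lra|]. rewrite IH. ring. Qed.

Lemma expect_const d c : dist_ok d -> expect d (fun _ => c) = c.
Proof.
  intros [_ Hsum].
  transitivity (fold_right (fun wa acc => fst wa + acc) 0 d * c); [|rewrite Hsum; ring].
  clear Hsum. induction d as [|wa d IH]; simpl; [lra|]. rewrite IH. ring.
Qed.

Lemma expect_le d X Y : dist_ok d ->
  (forall w a, In (w, a) d -> X a <= Y a) -> expect d X <= expect d Y.
Proof.
  intros [Hw _]. induction d as [|[w a] d IH]; intros H; simpl; [lra|].
  assert (0 <= w) by (apply (Hw w a); simpl; auto).
  assert (X a <= Y a) by (apply (H w); simpl; auto).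
  assert (expect d X <= expect d Y)
    by (apply IH; [intros; eapply Hw | intros; eapply H]; simpl; eauto).
  nra.
Qed.

Lemma expect_range d X lo hi : dist_ok d ->
  (forall w a, In (w, a) d -> lo <= X a <= hi) -> lo <= expect d X <= hi.
Proof.
  intros Hd HX. rewrite <- (expect_const d lo Hd) at 1. rewrite <- (expect_const d hi Hd).
  split; apply expect_le; auto; intros w a Hin; apply (HX w a Hin).
Qed.

Lemma expect_one_minus d X : dist_ok d -> expect d (fun a => 1 - X a) = 1 - expect d X.
Proof.
  intros Hd. transitivity (expect d (fun _ => 1) + expect d (fun a => -1 * X a)).
  - rewrite <- expect_add. apply expect_ext. intros. ring.
  - rewrite expect_const, expect_scal by exact Hd. ring.
Qed.

Lemma mix_le q x y x' y' : 0 <= q <= 1 -> x <= x' -> y <= y' ->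
  q * x + (1 - q) * y <= q * x' + (1 - q) * y'.
Proof. intros. nra. Qed.

Lemma state_of_snoc h a b : state_of (h ++ [(a, b)]) = (act_mem a, act_ptr a).
Proof. unfold state_of. rewrite fold_left_app. reflexivity. Qed.

Lemma hist_valid_stored_read n m h : hist_valid n m h ->
  forall x, In x (fst (state_of h)) -> (x < snd (state_of h))%nat.
Proof.
  induction 1 as [|h a b Hh IH Hv]; [simpl; tauto|].
  rewrite state_of_snoc. simpl. intros x Hx.
  destruct (state_of h) as [M p]. simpl in IH.
  destruct Hv as (Hp & _ & _ & Hm & _).
  destruct (Hm x Hx) as [Hin|Hr]; [specialize (IH x Hin)|]; lia.
Qed.

Section Streaming.
Variables (n m : nat) (A : algorithm) (T : nat).
Hypothesis HA : is_streaming_alg n m A.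

Lemma alg_dist_ok h : hist_valid n m h -> dist_ok (A T h).
Proof. intros Hh. apply (HA T h Hh). Qed.

Lemma alg_valid_action h w a : hist_valid n m h -> In (w, a) (A T h) ->
  valid_action n m (state_of h) a.
Proof. intros Hh. apply (HA T h Hh). Qed.

Lemma hist_valid_step h w a b : hist_valid n m h -> In (w, a) (A T h) ->
  hist_valid n m (h ++ [(a, b)]).
Proof. intros Hh Hin. apply hv_snoc; [exact Hh | exact (alg_valid_action h w a Hh Hin)]. Qed.

End Streaming.

Definition lsum (l : list nat) (F : nat -> R) : R :=
  fold_right (fun j acc => F j + acc) 0 l.

Lemma lsum_ext l F G : (forall x, In x l -> F x = G x) -> lsum l F = lsum l G.
Proof. induction l as [|x l IH]; simpl; intros H; auto. rewrite H, IH; auto. Qed.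

Lemma lsum_le l F G : (forall x, In x l -> F x <= G x) -> lsum l F <= lsum l G.
Proof.
  induction l as [|x l IH]; simpl; intros H; [lra|].
  assert (F x <= G x) by auto. assert (lsum l F <= lsum l G) by auto. lra.
Qed.

Lemma lsum_add l F G : lsum l (fun x => F x + G x) = lsum l F + lsum l G.
Proof. induction l; simpl; [lra|]. rewrite IHl. ring. Qed.

Lemma lsum_scal l c F : lsum l (fun x => c * F x) = c * lsum l F.
Proof. induction l; simpl; [ring|]. rewrite IHl. ring. Qed.

Lemma lsum_const l c : lsum l (fun _ => c) = INR (length l) * c.
Proof.
  induction l as [|x l IH]; [simpl; ring|].
  change (c + lsum l (fun _ => c) = INR (S (length l)) * c). rewrite IH, S_INR. ring.
Qed.

Lemma lsum_app l1 l2 F : lsum (l1 ++ l2) F = lsum l1 F + lsum l2 F.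
Proof. induction l1; simpl; [lra|]. rewrite IHl1. ring. Qed.

Lemma lsum_exists_gt l F c : c * INR (length l) < lsum l F -> exists x, In x l /\ c < F x.
Proof.
  induction l as [|x l IH]; intros H; [simpl in H; lra|].
  change (c * INR (S (length l)) < F x + lsum l F) in H. rewrite S_INR in H.
  destruct (Rlt_le_dec c (F x)) as [Hc|Hc]; [exists x; simpl; auto|].
  destruct IH as [y [Hy Hy']]; [lra | exists y; simpl; auto].
Qed.

Lemma lsum_split_at k n a b : (k <= n)%nat ->
  lsum (seq 1 n) (fun i => if Nat.leb i k then a else b) = INR k * a + INR (n - k) * b.
Proof.
  intros Hkn. replace n with (k + (n - k))%nat at 1 by lia. rewrite seq_app, lsum_app.
  rewrite (lsum_ext (seq 1 k) _ (fun _ => a)), (lsum_ext (seq (1 + k) (n - k)) _ (fun _ => b)).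
  - rewrite !lsum_const, !length_seq. reflexivity.
  - intros x Hx. apply in_seq in Hx. replace (Nat.leb x k) with false; auto.
    symmetry; apply Nat.leb_gt; lia.
  - intros x Hx. apply in_seq in Hx. replace (Nat.leb x k) with true; auto.
    symmetry; apply Nat.leb_le; lia.
Qed.

Lemma lsum_not_in_ge (l L : list nat) : NoDup l ->
  INR (length l) - INR (length L) <= lsum l (fun j => if in_dec Nat.eq_dec j L then 0 else 1).
Proof.
  revert L. induction l as [|j l IH]; intros L Hnd.
  - simpl. assert (0 <= INR (length L)) by apply pos_INR. lra.
  - inversion Hnd as [|? ? Hj Hnd']; subst.
    change (INR (S (length l)) - INR (length L) <=
      (if in_dec Nat.eq_dec j L then 0 else 1) + lsum l (fun j => if in_dec Nat.eq_dec j L then 0 else 1)).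
    rewrite S_INR. destruct (in_dec Nat.eq_dec j L) as [Hin|Hin]; [|specialize (IH L Hnd'); lra].
    rewrite (lsum_ext l _ (fun x => if in_dec Nat.eq_dec x (remove Nat.eq_dec j L) then 0 else 1)).
    + specialize (IH (remove Nat.eq_dec j L) Hnd').
      assert (Hl := remove_length_lt Nat.eq_dec L j Hin).
      assert (Hl' : (S (length (remove Nat.eq_dec j L)) <= length L)%nat) by lia.
      apply le_INR in Hl'. rewrite S_INR in Hl'. lra.
    + intros x Hx. assert (x <> j) by (intros ->; tauto).
      destruct (in_dec Nat.eq_dec x L) as [X|X];
      destruct (in_dec Nat.eq_dec x (remove Nat.eq_dec j L)) as [Y|Y]; auto.
      * exfalso. apply Y. apply in_in_remove; auto.
      * exfalso. apply X. apply in_remove in Y. tauto.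
Qed.

(** * Runs stopped at the first pull of an arm beyond [k] *)

Definition probs_upto (mu : nat -> R) (k : nat) : Prop :=
  forall i, (i <= k)%nat -> 0 <= mu i <= 1.

Section StoppedRun.
Variables (A : algorithm) (T : nat).

(** The run of [A] on means [mu], stopped at the first pull of an arm beyond
    [k]: every earlier pull costs [c], stopping with action [a] while [s]
    rounds remain (the current one included) pays [g s a], and a run that is
    never stopped ends with [z].  Only the means of the arms [<= k] matter. *)
Fixpoint stopped_exp (mu : nat -> R) (k : nat) (c : action -> R)
    (g : nat -> action -> R) (z : R) (s : nat) (h : history) {struct s} : R :=
  match s with
  | O => z
  | S s' => expect (A T h) (fun a =>
      if Nat.ltb k (act_pull a) then g s a
      else c a + mu (act_pull a) * stopped_exp mu k c g z s' (h ++ [(a, true)])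
           + (1 - mu (act_pull a)) * stopped_exp mu k c g z s' (h ++ [(a, false)]))
  end.

Lemma stopped_exp_add mu k c1 c2 g1 g2 z1 z2 s h :
  stopped_exp mu k (fun a => c1 a + c2 a) (fun s a => g1 s a + g2 s a) (z1 + z2) s h
  = stopped_exp mu k c1 g1 z1 s h + stopped_exp mu k c2 g2 z2 s h.
Proof.
  revert h; induction s as [|s IH]; intros h; simpl; [reflexivity|].
  rewrite <- expect_add. apply expect_ext. intros w a _.
  destruct (Nat.ltb k (act_pull a)); [ring|]. rewrite !IH. ring.
Qed.

Lemma stopped_exp_scal mu k r c g z s h :
  stopped_exp mu k (fun a => r * c a) (fun s a => r * g s a) (r * z) s h
  = r * stopped_exp mu k c g z s h.
Proof.
  revert h; induction s as [|s IH]; intros h; simpl; [reflexivity|].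
  rewrite <- expect_scal. apply expect_ext. intros w a _.
  destruct (Nat.ltb k (act_pull a)); [ring|]. rewrite !IH. ring.
Qed.

Lemma stopped_exp_ext_means mu mu' k c g z s h :
  (forall i, (i <= k)%nat -> mu i = mu' i) ->
  stopped_exp mu k c g z s h = stopped_exp mu' k c g z s h.
Proof.
  intros Hmu. revert h; induction s as [|s IH]; intros h; simpl; [reflexivity|].
  apply expect_ext. intros w a _.
  destruct (Nat.ltb k (act_pull a)) eqn:E; [reflexivity|].
  apply Nat.ltb_ge in E. rewrite Hmu, !IH by exact E. reflexivity.
Qed.

Lemma stopped_exp_ext mu k c c' g g' z z' s h :
  (forall a, c a = c' a) ->
  (forall s' a, (s' <= s)%nat -> (k < act_pull a)%nat -> g s' a = g' s' a) -> z = z' ->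
  stopped_exp mu k c g z s h = stopped_exp mu k c' g' z' s h.
Proof.
  intros Hc. revert h; induction s as [|s IH]; intros h Hg Hz; simpl; [exact Hz|].
  apply expect_ext. intros w a _. rewrite Hc.
  destruct (Nat.ltb k (act_pull a)) eqn:E.
  - apply Nat.ltb_lt in E. rewrite Hg by lia. reflexivity.
  - rewrite !IH; auto.
Qed.

Lemma stopped_exp_scal_payoff mu k r g s h :
  stopped_exp mu k (fun _ => 0) (fun s a => r * g s a) 0 s h
  = r * stopped_exp mu k (fun _ => 0) g 0 s h.
Proof. rewrite <- stopped_exp_scal. apply stopped_exp_ext; intros; ring. Qed.

Variables (n m : nat).
Hypothesis HA : is_streaming_alg n m A.

Lemma stopped_exp_mono mu k c1 c2 g1 g2 z1 z2 s h : probs_upto mu k ->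
  (forall a st, valid_action n m st a -> c1 a <= c2 a) ->
  (forall s a st, valid_action n m st a -> g1 s a <= g2 s a) -> z1 <= z2 ->
  hist_valid n m h ->
  stopped_exp mu k c1 g1 z1 s h <= stopped_exp mu k c2 g2 z2 s h.
Proof.
  intros Hmu Hc Hg Hz. revert h; induction s as [|s IH]; intros h Hh; simpl; [exact Hz|].
  apply expect_le; [exact (alg_dist_ok n m A T HA h Hh)|]. intros w a Hin.
  assert (Hv := alg_valid_action n m A T HA h w a Hh Hin).
  destruct (Nat.ltb k (act_pull a)) eqn:E; [exact (Hg _ _ _ Hv)|].
  apply Nat.ltb_ge in E.
  assert (Hmix := mix_le (mu (act_pull a))
    (stopped_exp mu k c1 g1 z1 s (h ++ [(a, true)])) (stopped_exp mu k c1 g1 z1 s (h ++ [(a, false)]))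
    (stopped_exp mu k c2 g2 z2 s (h ++ [(a, true)])) (stopped_exp mu k c2 g2 z2 s (h ++ [(a, false)]))
    (Hmu _ E) (IH _ (hist_valid_step n m A T HA h w a true Hh Hin))
    (IH _ (hist_valid_step n m A T HA h w a false Hh Hin))).
  specialize (Hc a _ Hv). lra.
Qed.

Lemma stopped_exp_const mu k r s h : hist_valid n m h ->
  stopped_exp mu k (fun _ => 0) (fun _ _ => r) r s h = r.
Proof.
  revert h; induction s as [|s IH]; intros h Hh; simpl; [reflexivity|].
  transitivity (expect (A T h) (fun _ => r)); [|exact (expect_const _ r (alg_dist_ok n m A T HA h Hh))].
  apply expect_ext. intros w a Hin.
  destruct (Nat.ltb k (act_pull a)); [reflexivity|].
  rewrite !IH by (eapply hist_valid_step; eauto). ring.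
Qed.

Lemma stopped_exp_range mu k g z lo hi s h : probs_upto mu k ->
  (forall s a, lo <= g s a <= hi) -> lo <= z <= hi -> hist_valid n m h ->
  lo <= stopped_exp mu k (fun _ => 0) g z s h <= hi.
Proof.
  intros Hmu Hg Hz Hh. split.
  - rewrite <- (stopped_exp_const mu k lo s h Hh) at 1.
    apply stopped_exp_mono; auto; intros; try lra; apply Hg.
  - rewrite <- (stopped_exp_const mu k hi s h Hh).
    apply stopped_exp_mono; auto; intros; try lra; apply Hg.
Qed.

Lemma stopped_exp_sum mu k (l : list nat) C G Z s h : hist_valid n m h ->
  stopped_exp mu k (fun a => lsum l (fun j => C j a)) (fun s a => lsum l (fun j => G j s a))
    (lsum l Z) s h
  = lsum l (fun j => stopped_exp mu k (C j) (G j) (Z j) s h).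
Proof.
  intros Hh. induction l as [|j l IH]; simpl.
  - apply stopped_exp_const; exact Hh.
  - rewrite stopped_exp_add, IH. reflexivity.
Qed.

Lemma stopped_exp_complement mu k (b : nat -> bool) s h : hist_valid n m h ->
  stopped_exp mu k (fun _ => 0) (fun s _ => if b s then 1 else 0) 0 s h +
  stopped_exp mu k (fun _ => 0) (fun s _ => if b s then 0 else 1) 1 s h = 1.
Proof.
  intros Hh. rewrite <- stopped_exp_add.
  rewrite <- (stopped_exp_const mu k 1 s h Hh) at 2.
  apply stopped_exp_ext; intros; try ring. destruct (b s'); ring.
Qed.

Lemma stopped_exp_affine mu k eta G s h : hist_valid n m h ->
  stopped_exp mu k (fun _ => 0) (fun s a => eta + (1 - 2 * eta) * G s a) eta s h
  = eta + (1 - 2 * eta) * stopped_exp mu k (fun _ => 0) G 0 s h.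
Proof.
  intros Hh. rewrite <- stopped_exp_scal_payoff.
  rewrite <- (stopped_exp_const mu k eta s h Hh) at 2.
  rewrite <- stopped_exp_add. apply stopped_exp_ext; intros; ring.
Qed.

(** Counting the pulls before stopping is the same as collecting, at the
    stop, the number of rounds already played. *)
Lemma stopped_exp_count mu k s h : hist_valid n m h ->
  stopped_exp mu k (fun _ => 1) (fun _ _ => 0) 0 s h =
  stopped_exp mu k (fun _ => 0) (fun s' _ => INR (s - s')) (INR s) s h.
Proof.
  revert h; induction s as [|s IH]; intros h Hh; [reflexivity|].
  simpl. apply expect_ext. intros w a Hin.
  destruct (Nat.ltb k (act_pull a)); [rewrite Nat.sub_diag; simpl; ring|].
  assert (Hshift : forall b, hist_valid n m (h ++ [(a, b)]) ->
    stopped_exp mu k (fun _ => 0) (fun s' _ => INR (S s - s')) (INR (S s)) s (h ++ [(a, b)])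
    = stopped_exp mu k (fun _ => 1) (fun _ _ => 0) 0 s (h ++ [(a, b)]) + 1).
  { intros b Hb.
    rewrite (stopped_exp_ext mu k _ (fun _ => 0 + 0) _ (fun s' _ => INR (s - s') + 1) _ (INR s + 1)).
    - rewrite stopped_exp_add, IH, stopped_exp_const; auto.
    - intros; ring.
    - intros s' a' Hs' _. replace (S s - s')%nat with (S (s - s')) by lia. apply S_INR.
    - apply S_INR. }
  rewrite !Hshift by (eapply hist_valid_step; eauto). ring.
Qed.

Lemma stopped_exp_markov mu k h : hist_valid n m h -> probs_upto mu k ->
  INR T / 2 * stopped_exp mu k (fun _ => 0) (fun s _ => if Nat.leb T (2 * s) then 0 else 1) 1 T h
  <= stopped_exp mu k (fun _ => 1) (fun _ _ => 0) 0 T h.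
Proof.
  intros Hh Hmu. rewrite stopped_exp_count by exact Hh.
  rewrite <- stopped_exp_scal. apply stopped_exp_mono; auto.
  - intros; lra.
  - intros s a st _. destruct (Nat.leb T (2 * s)) eqn:E.
    + rewrite Rmult_0_r. apply pos_INR.
    + apply Nat.leb_gt in E. rewrite minus_INR by lia.
      assert (H2 : INR (2 * s) < INR T) by (apply lt_INR; lia).
      rewrite mult_INR in H2. replace (INR 2) with 2 in H2 by (simpl; ring). lra.
  - assert (0 <= INR T) by apply pos_INR. lra.
Qed.

End StoppedRun.

(** [lost_early T j s a] is meant to be read at a stop, i.e. after a pull of
    an arm beyond [k >= j]: then arm [j] has been read, and if it is not
    stored it is lost for good; [s] rounds of [T] remain. *)
Definition lost_early (T j s : nat) (a : action) : R :=
  if in_dec Nat.eq_dec j (act_mem a) then 0 else if Nat.leb T (2 * s) then 1 else 0.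

Section RegretLowerBounds.
Variables (n m : nat) (A : algorithm) (T : nat).
Hypothesis HA : is_streaming_alg n m A.
Variables (mu : nat -> R) (ms : R).
Hypothesis Hmu : forall i, 0 <= mu i <= 1 /\ mu i <= ms.

Lemma exp_regret_from_S s h : exp_regret_from A T mu ms (S s) h =
  expect (A T h) (fun a => ms - mu (act_pull a)
     + mu (act_pull a) * exp_regret_from A T mu ms s (h ++ [(a, true)])
     + (1 - mu (act_pull a)) * exp_regret_from A T mu ms s (h ++ [(a, false)])).
Proof. reflexivity. Qed.

Lemma exp_regret_from_nonneg s h : hist_valid n m h -> 0 <= exp_regret_from A T mu ms s h.
Proof.
  revert h; induction s as [|s IH]; intros h Hh; [simpl; lra|].
  rewrite exp_regret_from_S.
  assert (Hd := alg_dist_ok n m A T HA h Hh).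
  rewrite <- (expect_const _ 0 Hd). apply expect_le; [exact Hd|]. intros w a Hin.
  assert (Hmix := mix_le (mu (act_pull a)) 0 0
    (exp_regret_from A T mu ms s (h ++ [(a, true)])) (exp_regret_from A T mu ms s (h ++ [(a, false)]))
    (proj1 (Hmu _)) (IH _ (hist_valid_step n m A T HA h w a true Hh Hin))
    (IH _ (hist_valid_step n m A T HA h w a false Hh Hin))).
  destruct (Hmu (act_pull a)). lra.
Qed.

Lemma exp_regret_from_ge_pull_cost k gam s h :
  (forall i, (i <= k)%nat -> gam <= ms - mu i) -> hist_valid n m h ->
  stopped_exp A T mu k (fun _ => gam) (fun _ _ => 0) 0 s h <= exp_regret_from A T mu ms s h.
Proof.
  intros Hgam. revert h; induction s as [|s IH]; intros h Hh; [simpl; lra|].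
  rewrite exp_regret_from_S. simpl stopped_exp.
  apply expect_le; [exact (alg_dist_ok n m A T HA h Hh)|]. intros w a Hin.
  assert (HhT := hist_valid_step n m A T HA h w a true Hh Hin).
  assert (HhF := hist_valid_step n m A T HA h w a false Hh Hin).
  destruct (Hmu (act_pull a)).
  destruct (Nat.ltb k (act_pull a)) eqn:Ek.
  - assert (Hmix := mix_le (mu (act_pull a)) 0 0 _ _ (proj1 (Hmu _))
      (exp_regret_from_nonneg s _ HhT) (exp_regret_from_nonneg s _ HhF)). lra.
  - apply Nat.ltb_ge in Ek. specialize (Hgam _ Ek).
    assert (Hmix := mix_le (mu (act_pull a)) _ _ _ _ (proj1 (Hmu _)) (IH _ HhT) (IH _ HhF)). lra.
Qed.

Variables (j : nat) (e : R).
Hypothesis He : 0 <= e.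
Hypothesis Hgap : forall i, i <> j -> e <= ms - mu i.

Lemma exp_regret_from_ge_lost s h : hist_valid n m h ->
  ~ In j (fst (state_of h)) -> (j < snd (state_of h))%nat ->
  e * INR s <= exp_regret_from A T mu ms s h.
Proof.
  revert h; induction s as [|s IH]; intros h Hh Hj1 Hj2; [simpl; lra|].
  rewrite exp_regret_from_S.
  assert (Hd := alg_dist_ok n m A T HA h Hh).
  rewrite <- (expect_const _ (e * INR (S s)) Hd). apply expect_le; [exact Hd|]. intros w a Hin.
  assert (Hv := alg_valid_action n m A T HA h w a Hh Hin).
  destruct (state_of h) as [M p] eqn:EM. simpl in Hj1, Hj2.
  destruct Hv as (Hp & _ & _ & Hmem & Hpull).
  assert (Hnj : ~ In j (act_mem a)).
  { intros Hin'. destruct (Hmem _ Hin') as [X|X]; [tauto|lia]. }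
  assert (Hpj : act_pull a <> j) by (intros E; rewrite E in Hpull; tauto).
  assert (Hnext : forall b, e * INR s <= exp_regret_from A T mu ms s (h ++ [(a, b)])).
  { intros b. apply IH; [exact (hist_valid_step n m A T HA h w a b Hh Hin)| |];
      rewrite state_of_snoc; simpl; [exact Hnj | lia]. }
  assert (Hmix := mix_le (mu (act_pull a)) _ _ _ _ (proj1 (Hmu _)) (Hnext true) (Hnext false)).
  specialize (Hgap _ Hpj). rewrite S_INR. lra.
Qed.

Lemma exp_regret_from_ge_lost_early k s h : (j <= k)%nat -> hist_valid n m h ->
  stopped_exp A T mu k (fun _ => 0) (fun s a => e * (INR T / 2) * lost_early T j s a) 0 s h
  <= exp_regret_from A T mu ms s h.
Proof.
  intros Hjk. revert h; induction s as [|s IH]; intros h Hh; [simpl; lra|].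
  rewrite exp_regret_from_S. simpl stopped_exp.
  apply expect_le; [exact (alg_dist_ok n m A T HA h Hh)|]. intros w a Hin.
  assert (Hv := alg_valid_action n m A T HA h w a Hh Hin).
  assert (HhT := hist_valid_step n m A T HA h w a true Hh Hin).
  assert (HhF := hist_valid_step n m A T HA h w a false Hh Hin).
  assert (Hmix0 := mix_le (mu (act_pull a)) 0 0 _ _ (proj1 (Hmu _))
    (exp_regret_from_nonneg s _ HhT) (exp_regret_from_nonneg s _ HhF)).
  destruct (Hmu (act_pull a)).
  destruct (Nat.ltb k (act_pull a)) eqn:Ek.
  - apply Nat.ltb_lt in Ek. unfold lost_early.
    destruct (in_dec Nat.eq_dec j (act_mem a)) as [Hi|Hni]; [lra|].
    destruct (Nat.leb T (2 * S s)) eqn:ET; [|lra].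
    apply Nat.leb_le, le_INR in ET. rewrite mult_INR, (S_INR s) in ET.
    replace (INR 2) with 2 in ET by (simpl; ring).
    assert (Hread := hist_valid_stored_read n m h Hh).
    destruct (state_of h) as [M p] eqn:EM. simpl in Hread.
    destruct Hv as (Hp & _ & _ & Hmem & Hpull).
    assert (Hpp : (act_pull a < act_ptr a)%nat).
    { destruct (Hmem _ Hpull) as [X|X]; [specialize (Hread _ X)|]; lia. }
    assert (Hlost : forall b, e * INR s <= exp_regret_from A T mu ms s (h ++ [(a, b)])).
    { intros b. apply exp_regret_from_ge_lost;
        [exact (hist_valid_step n m A T HA h w a b Hh Hin) | |];
        rewrite state_of_snoc; simpl; [exact Hni | lia]. }
    assert (Hmix := mix_le (mu (act_pull a)) _ _ _ _ (proj1 (Hmu _)) (Hlost true) (Hlost false)).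
    assert (Hg := Hgap (act_pull a) ltac:(lia)).
    assert (e * (INR T / 2) <= e * (INR s + 1)) by (apply Rmult_le_compat_l; lra).
    lra.
  - assert (Hmix := mix_le (mu (act_pull a)) _ _ _ _ (proj1 (Hmu _)) (IH _ HhT) (IH _ HhF)). lra.
Qed.

End RegretLowerBounds.

(** * Bernoulli divergence *)

Lemma Rpower_pos x y : 0 < Rpower x y.
Proof. apply exp_pos. Qed.

Lemma ln_le x y : 0 < x -> x <= y -> ln x <= ln y.
Proof. intros Hx [H|H]; [left; apply ln_increasing; auto | subst; lra]. Qed.

Lemma ln_le_inv x y : 0 < x -> 0 < y -> ln x <= ln y -> x <= y.
Proof. intros Hx Hy [H|H]; [left; apply ln_lt_inv | right; apply ln_inv]; auto. Qed.

Lemma ln_div x y : 0 < x -> 0 < y -> ln (x / y) = ln x - ln y.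
Proof.
  intros. unfold Rdiv. rewrite ln_mult by (try apply Rinv_0_lt_compat; auto).
  rewrite ln_Rinv by auto. ring.
Qed.

Lemma ln_sqrt x : 0 < x -> ln (sqrt x) = ln x / 2.
Proof.
  intros Hx. assert (Hs := sqrt_lt_R0 x Hx).
  assert (E : ln x = ln (sqrt x * sqrt x)) by (rewrite sqrt_sqrt; lra).
  rewrite ln_mult in E; auto. lra.
Qed.

Lemma ln_le_sub1 z : 0 < z -> ln z <= z - 1.
Proof.
  intros Hz. rewrite <- (ln_exp (z - 1)). apply ln_le; auto.
  generalize (exp_ineq1_le (z - 1)). lra.
Qed.

(** Tangent-line form of the log-sum inequality. *)
Lemma xlog_ratio_ge X Y a b : 0 < X -> 0 < Y -> 0 < a -> 0 < b ->
  X * (ln a - ln b) + X - a / b * Y <= X * (ln X - ln Y).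
Proof.
  intros. set (z := a * Y / (b * X)).
  assert (Hz : 0 < z) by (unfold z; apply Rdiv_lt_0_compat; apply Rmult_lt_0_compat; auto).
  assert (Hl := ln_le_sub1 z Hz).
  assert (ln z = ln a + ln Y - ln b - ln X).
  { unfold z. rewrite ln_div, !ln_mult; auto; try ring; apply Rmult_lt_0_compat; auto. }
  assert (X * z = a / b * Y) by (unfold z; field; lra).
  assert (X * ln z <= X * (z - 1)) by (apply Rmult_le_compat_l; lra).
  nra.
Qed.

Lemma log_sum2 a b c d : 0 < a -> 0 < b -> 0 < c -> 0 < d ->
  (a + c) * (ln (a + c) - ln (b + d)) <= a * (ln a - ln b) + c * (ln c - ln d).
Proof.
  intros Ha Hb Hc Hd.
  assert (H1 := xlog_ratio_ge a b (a + c) (b + d) Ha Hb ltac:(lra) ltac:(lra)).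
  assert (H2 := xlog_ratio_ge c d (a + c) (b + d) Hc Hd ltac:(lra) ltac:(lra)).
  assert ((a + c) / (b + d) * b + (a + c) / (b + d) * d = a + c) by (field; lra).
  lra.
Qed.

Lemma expect_log_sum d X Y : dist_ok d ->
  (forall w a, In (w, a) d -> 0 < X a /\ 0 < Y a) ->
  0 < expect d X -> 0 < expect d Y ->
  expect d X * (ln (expect d X) - ln (expect d Y))
  <= expect d (fun a => X a * (ln (X a) - ln (Y a))).
Proof.
  intros Hd HXY HX HY. set (EX := expect d X). set (EY := expect d Y).
  transitivity (expect d (fun a => (ln EX - ln EY) * X a + X a + - (EX / EY) * Y a)).
  - right. rewrite !expect_add, !expect_scal. fold EX EY. field. unfold EY. lra.
  - apply expect_le; [exact Hd|]. intros w a Hin. destruct (HXY _ _ Hin) as [HXa HYa].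
    assert (Ht := xlog_ratio_ge (X a) (Y a) EX EY HXa HYa HX HY). lra.
Qed.

Definition kl (x y : R) : R := x * (ln x - ln y) + (1 - x) * (ln (1 - x) - ln (1 - y)).

Lemma kl_self x : kl x x = 0.
Proof. unfold kl. ring. Qed.

Lemma kl_expect_le d X Y eta : dist_ok d -> 0 < eta ->
  (forall w a, In (w, a) d -> eta <= X a <= 1 - eta /\ eta <= Y a <= 1 - eta) ->
  kl (expect d X) (expect d Y) <= expect d (fun a => kl (X a) (Y a)).
Proof.
  intros Hd Heta HXY.
  assert (RX : eta <= expect d X <= 1 - eta)
    by (apply expect_range; auto; intros w a Hin; apply (HXY w a Hin)).
  assert (RY : eta <= expect d Y <= 1 - eta)
    by (apply expect_range; auto; intros w a Hin; apply (HXY w a Hin)).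
  assert (L1 := expect_log_sum d X Y Hd
    ltac:(intros w a Hin; destruct (HXY _ _ Hin); lra) ltac:(lra) ltac:(lra)).
  assert (L2 := expect_log_sum d (fun a => 1 - X a) (fun a => 1 - Y a) Hd
    ltac:(intros w a Hin; destruct (HXY _ _ Hin); lra)
    ltac:(rewrite expect_one_minus; auto; lra) ltac:(rewrite expect_one_minus; auto; lra)).
  rewrite !expect_one_minus in L2 by exact Hd.
  unfold kl at 1. transitivity (expect d (fun a => X a * (ln (X a) - ln (Y a))) +
    expect d (fun a => (1 - X a) * (ln (1 - X a) - ln (1 - Y a)))); [lra|].
  rewrite <- expect_add. right. reflexivity.
Qed.

Lemma kl_chain_le q0 q1 x y x' y' :
  0 < q0 < 1 -> 0 < q1 < 1 -> 0 < x < 1 -> 0 < y < 1 -> 0 < x' < 1 -> 0 < y' < 1 ->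
  kl (q0 * x + (1 - q0) * x') (q1 * y + (1 - q1) * y')
  <= kl q0 q1 + q0 * kl x y + (1 - q0) * kl x' y'.
Proof.
  intros Q0 Q1 X0 Y0 X1 Y1. unfold kl.
  assert (K1 := log_sum2 (q0 * x) (q1 * y) ((1 - q0) * x') ((1 - q1) * y')
     ltac:(nra) ltac:(nra) ltac:(nra) ltac:(nra)).
  assert (K2 := log_sum2 (q0 * (1 - x)) (q1 * (1 - y)) ((1 - q0) * (1 - x')) ((1 - q1) * (1 - y'))
     ltac:(nra) ltac:(nra) ltac:(nra) ltac:(nra)).
  replace (q0 * (1 - x) + (1 - q0) * (1 - x')) with (1 - (q0 * x + (1 - q0) * x')) in K2 by ring.
  replace (q1 * (1 - y) + (1 - q1) * (1 - y')) with (1 - (q1 * y + (1 - q1) * y')) in K2 by ring.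
  rewrite !ln_mult in K1, K2 by nra.
  lra.
Qed.

Lemma hellinger_le_kl f p : 0 < f < 1 -> 0 < p < 1 -> (sqrt f - sqrt p) ^ 2 <= kl f p.
Proof.
  intros Hf Hp.
  assert (Sf := sqrt_lt_R0 f ltac:(lra)). assert (Sp := sqrt_lt_R0 p ltac:(lra)).
  assert (Sf' := sqrt_lt_R0 (1 - f) ltac:(lra)). assert (Sp' := sqrt_lt_R0 (1 - p) ltac:(lra)).
  assert (Qf := sqrt_sqrt f ltac:(lra)). assert (Qf' := sqrt_sqrt (1 - f) ltac:(lra)).
  assert (Qp := sqrt_sqrt p ltac:(lra)). assert (Qp' := sqrt_sqrt (1 - p) ltac:(lra)).
  assert (L1 := ln_le_sub1 (sqrt p / sqrt f) ltac:(apply Rdiv_lt_0_compat; auto)).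
  assert (L2 := ln_le_sub1 (sqrt (1 - p) / sqrt (1 - f)) ltac:(apply Rdiv_lt_0_compat; auto)).
  rewrite ln_div, !ln_sqrt in L1, L2 by lra.
  assert (f * (ln f - ln p) >= 2 * f - 2 * sqrt f * sqrt p).
  { assert (f * (ln p / 2 - ln f / 2) <= f * (sqrt p / sqrt f - 1)) by (apply Rmult_le_compat_l; lra).
    assert (f * (sqrt p / sqrt f) = sqrt f * sqrt p) by (rewrite <- Qf at 1; field; lra). lra. }
  assert ((1 - f) * (ln (1 - f) - ln (1 - p)) >= 2 * (1 - f) - 2 * sqrt (1 - f) * sqrt (1 - p)).
  { assert ((1 - f) * (ln (1 - p) / 2 - ln (1 - f) / 2) <= (1 - f) * (sqrt (1 - p) / sqrt (1 - f) - 1))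
      by (apply Rmult_le_compat_l; lra).
    assert ((1 - f) * (sqrt (1 - p) / sqrt (1 - f)) = sqrt (1 - f) * sqrt (1 - p))
      by (rewrite <- Qf' at 1; field; lra). lra. }
  assert (0 <= (sqrt (1 - f) - sqrt (1 - p)) ^ 2) by apply pow2_ge_0. unfold kl. nra.
Qed.

Lemma kl_le_chi2 q0 q1 : 0 < q0 < 1 -> 0 < q1 < 1 ->
  kl q0 q1 <= (q0 - q1) ^ 2 / (q1 * (1 - q1)).
Proof.
  intros. unfold kl.
  assert (L1 := ln_le_sub1 (q0 / q1) ltac:(apply Rdiv_lt_0_compat; lra)).
  assert (L2 := ln_le_sub1 ((1 - q0) / (1 - q1)) ltac:(apply Rdiv_lt_0_compat; lra)).
  rewrite ln_div in L1, L2 by lra.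
  assert (q0 * (ln q0 - ln q1) <= q0 * (q0 / q1 - 1)) by (apply Rmult_le_compat_l; lra).
  assert ((1 - q0) * (ln (1 - q0) - ln (1 - q1)) <= (1 - q0) * ((1 - q0) / (1 - q1) - 1))
    by (apply Rmult_le_compat_l; lra).
  assert (q0 * (q0 / q1 - 1) + (1 - q0) * ((1 - q0) / (1 - q1) - 1) = (q0 - q1) ^ 2 / (q1 * (1 - q1)))
    by (field; lra).
  lra.
Qed.

(** Through the Hellinger distance; [eta] keeps the smoothed probabilities
    away from 0 and 1, where [kl] degenerates. *)
Lemma prob_lower_from_kl eta f p D : 0 < eta <= / 32 -> 0 <= f <= 1 -> 0 <= p <= 1 ->
  kl (eta + (1 - 2 * eta) * f) (eta + (1 - 2 * eta) * p) <= D ->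
  3 / 4 * f - 16 / 15 * (eta / 4 + 4 * D) <= p.
Proof.
  intros Heta Hf Hp HD.
  set (F := eta + (1 - 2 * eta) * f) in HD. set (P := eta + (1 - 2 * eta) * p) in HD.
  assert (HF : 0 < F < 1) by (unfold F; nra). assert (HP : 0 < P < 1) by (unfold P; nra).
  assert (Hh := hellinger_le_kl F P HF HP).
  assert (Hsq : 3 / 4 * sqrt F ^ 2 - 4 * D <= sqrt P ^ 2).
  { assert (Hd2 : (sqrt F - sqrt P) ^ 2 <= D) by lra. clear -Hd2.
    assert (0 <= (sqrt F / 2 - 2 * (sqrt F - sqrt P)) ^ 2) by apply pow2_ge_0. nra. }
  rewrite <- !Rsqr_pow2, !Rsqr_sqrt in Hsq by lra. unfold F, P in Hsq.
  assert (0 <= D) by (generalize (pow2_ge_0 (sqrt F - sqrt P)); lra).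
  destruct (Rle_dec 0 (p - 3 / 4 * f)); [lra|].
  assert ((1 - 2 * eta) * (p - 3 / 4 * f) <= 15 / 16 * (p - 3 / 4 * f)) by nra.
  lra.
Qed.

Definition pull_count (j : nat) (a : action) : R := if Nat.eqb (act_pull a) j then 1 else 0.

Section DivergenceDecomposition.
Variables (n m : nat) (A : algorithm) (T : nat).
Hypothesis HA : is_streaming_alg n m A.
Variables (mu0 mu1 : nat -> R) (k j : nat).
Hypothesis Hagree : forall i, i <> j -> mu0 i = mu1 i.
Hypothesis Hopen : forall i, (i <= k)%nat -> 0 < mu0 i < 1 /\ 0 < mu1 i < 1.
Variables (eta : R) (g : nat -> action -> R) (z : R).
Hypothesis Heta : 0 < eta.
Hypothesis Hg : forall s a, eta <= g s a <= 1 - eta.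
Hypothesis Hz : eta <= z <= 1 - eta.

Lemma stopped_exp_kl_le s h : hist_valid n m h ->
  kl (stopped_exp A T mu0 k (fun _ => 0) g z s h) (stopped_exp A T mu1 k (fun _ => 0) g z s h)
  <= kl (mu0 j) (mu1 j) * stopped_exp A T mu0 k (pull_count j) (fun _ _ => 0) 0 s h.
Proof.
  assert (Hmu0 : probs_upto mu0 k) by (intros i Hi; destruct (Hopen i Hi); lra).
  assert (Hmu1 : probs_upto mu1 k) by (intros i Hi; destruct (Hopen i Hi); lra).
  revert h; induction s as [|s IH]; intros h Hh; [simpl; rewrite kl_self; lra|].
  assert (Hd := alg_dist_ok n m A T HA h Hh).
  assert (Hrange : forall mu, probs_upto mu k -> forall w a b, In (w, a) (A T h) ->
    eta <= stopped_exp A T mu k (fun _ => 0) g z s (h ++ [(a, b)]) <= 1 - eta).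
  { intros mu Hmu w a b Hin. apply (stopped_exp_range A T n m HA); auto.
    exact (hist_valid_step n m A T HA h w a b Hh Hin). }
  simpl stopped_exp. eapply Rle_trans.
  { apply kl_expect_le with (eta := eta); [exact Hd | exact Heta|]. intros w a Hin.
    destruct (Nat.ltb k (act_pull a)) eqn:E; [split; apply Hg|].
    apply Nat.ltb_ge in E. destruct (Hopen _ E).
    destruct (Hrange mu0 Hmu0 w a true Hin), (Hrange mu0 Hmu0 w a false Hin).
    destruct (Hrange mu1 Hmu1 w a true Hin), (Hrange mu1 Hmu1 w a false Hin).
    split; nra. }
  rewrite <- expect_scal. apply expect_le; [exact Hd|]. intros w a Hin.
  destruct (Nat.ltb k (act_pull a)) eqn:E; [rewrite kl_self; lra|].
  apply Nat.ltb_ge in E. destruct (Hopen _ E) as [Q0 Q1].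
  destruct (Hrange mu0 Hmu0 w a true Hin), (Hrange mu0 Hmu0 w a false Hin).
  destruct (Hrange mu1 Hmu1 w a true Hin), (Hrange mu1 Hmu1 w a false Hin).
  assert (IT := IH _ (hist_valid_step n m A T HA h w a true Hh Hin)).
  assert (IF := IH _ (hist_valid_step n m A T HA h w a false Hh Hin)).
  rewrite !Rplus_0_l.
  eapply Rle_trans; [apply kl_chain_le; lra|].
  assert (Hmix := mix_le (mu0 (act_pull a)) _ _ _ _ ltac:(lra) IT IF).
  destruct (Nat.eq_dec (act_pull a) j) as [Ej|Ej].
  - assert (Hc : pull_count j a = 1) by (unfold pull_count; rewrite Ej, Nat.eqb_refl; reflexivity).
    rewrite Hc. rewrite Ej in Hmix |- *. lra.
  - assert (Hc : pull_count j a = 0) by (unfold pull_count; rewrite (proj2 (Nat.eqb_neq _ _) Ej); reflexivity).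
    rewrite Hc, <- (Hagree _ Ej), kl_self. lra.
Qed.

End DivergenceDecomposition.

Lemma lsum_pull_count_le1 l a : NoDup l -> lsum l (fun j => pull_count j a) <= 1.
Proof.
  induction l as [|j l IH]; intros Hnd; simpl; [lra|].
  inversion Hnd as [|? ? Hj Hnd']; subst. unfold pull_count at 1.
  destruct (Nat.eqb (act_pull a) j) eqn:E; [|specialize (IH Hnd'); lra].
  apply Nat.eqb_eq in E.
  rewrite (lsum_ext l _ (fun _ => 0)), lsum_const; [lra|].
  intros x Hx. unfold pull_count. destruct (Nat.eqb (act_pull a) x) eqn:E2; auto.
  apply Nat.eqb_eq in E2. congruence.
Qed.

(** At a stop at most [m - 1] of the arms [1..k] can still be stored, since
    the pulled arm lies beyond [k]. *)
Lemma lsum_lost_early_ge n m k st a T s : valid_action n m st a -> (k < act_pull a)%nat ->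
  (m <= k)%nat ->
  INR (k - m + 1) * (if Nat.leb T (2 * s) then 1 else 0)
  <= lsum (seq 1 k) (fun j => lost_early T j s a).
Proof.
  intros Hv Hk Hmk. destruct st as [M p]. destruct Hv as (_ & Hnd & Hlen & _ & Hpull).
  unfold lost_early. destruct (Nat.leb T (2 * s)).
  - set (L := remove Nat.eq_dec (act_pull a) (act_mem a)).
    transitivity (lsum (seq 1 k) (fun j => if in_dec Nat.eq_dec j L then 0 else 1)).
    + eapply Rle_trans; [|apply lsum_not_in_ge, seq_NoDup]. rewrite length_seq.
      assert (Hl := remove_length_lt Nat.eq_dec (act_mem a) (act_pull a) Hpull).
      assert (HL : (length L + (k - m + 1) <= k)%nat) by (unfold L; lia).
      apply le_INR in HL. rewrite plus_INR in HL. lra.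
    + right. apply lsum_ext. intros x Hx. apply in_seq in Hx. assert (x <> act_pull a) by lia.
      destruct (in_dec Nat.eq_dec x (act_mem a)) as [X|X];
      destruct (in_dec Nat.eq_dec x L) as [Y|Y]; auto; exfalso; unfold L in Y.
      * apply Y. apply in_in_remove; auto.
      * apply X. apply in_remove in Y. tauto.
  - transitivity (lsum (seq 1 k) (fun _ => 0)); [rewrite lsum_const; lra|].
    apply lsum_le. intros. destruct (in_dec Nat.eq_dec x (act_mem a)); simpl; lra.
Qed.

(** * Choice of the perturbation size *)

Lemma eps_pos k T alpha : 0 < eps k T alpha.
Proof. unfold eps. apply Rmult_lt_0_compat; [lra | apply Rpower_pos]. Qed.

Lemma ln16 : ln 16 = 2 * ln 4.
Proof. replace 16 with (4 * 4) by lra. rewrite ln_mult by lra. ring. Qed.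

Lemma eps_ln k T alpha : (0 < k)%nat -> (0 < T)%nat -> 0 <= alpha ->
  (2 + 2 * alpha) * ln (eps k T alpha) = - (alpha + 1) * ln 16 + ln (INR k) - ln (INR T).
Proof.
  intros Hk HT Ha. unfold eps.
  assert (0 < INR k) by (apply lt_0_INR; lia). assert (0 < INR T) by (apply lt_0_INR; lia).
  rewrite ln_mult by (try apply Rpower_pos; lra).
  rewrite ln_Rinv, ln_Rpower, ln_div, ln16 by lra. field. lra.
Qed.

Lemma eps_small_for_large_T alpha n k : 1 <= alpha -> (0 < k)%nat ->
  exists T0 : nat, forall T : nat, (T0 <= T)%nat ->
    (0 < T)%nat /\ eps k T alpha * (INR n + 1) <= / 40 /\ INR k <= eps k T alpha ^ 2 * INR T.
Proof.
  intros Ha Hk.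
  assert (Hn : 0 < INR n + 1) by (assert (0 <= INR n) by apply pos_INR; lra).
  assert (Hk' : 0 < INR k) by (apply lt_0_INR; lia).
  destruct (INR_archimed 1 (INR k * Rpower (10 * (INR n + 1)) (2 + 2 * alpha)) ltac:(lra))
    as [N HN]. rewrite Rmult_1_r in HN.
  exists (Nat.max N 1). intros T HT.
  assert (HT0 : (0 < T)%nat) by lia.
  assert (HT' : 0 < INR T) by (apply lt_0_INR; lia).
  assert (HNT : INR N <= INR T) by (apply le_INR; lia).
  assert (P := Rpower_pos (10 * (INR n + 1)) (2 + 2 * alpha)).
  assert (HX : ln (INR k) + (2 + 2 * alpha) * ln (10 * (INR n + 1)) < ln (INR T)).
  { rewrite <- ln_Rpower, <- ln_mult by (auto; lra). apply ln_increasing; nra. }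
  set (e := eps k T alpha).
  assert (He := eps_pos k T alpha). fold e in He.
  assert (Hln := eps_ln k T alpha Hk HT0 ltac:(lra)). fold e in Hln.
  assert (Hle : ln e < - ln (40 * (INR n + 1))).
  { replace (40 * (INR n + 1)) with (4 * (10 * (INR n + 1))) by ring.
    rewrite ln_mult by lra. rewrite ln16 in Hln. nra. }
  split; [exact HT0 | split].
  - apply Rmult_le_reg_r with (/ (INR n + 1)); [apply Rinv_0_lt_compat; lra|].
    rewrite Rmult_assoc, Rinv_r, Rmult_1_r, <- Rinv_mult by lra.
    left. apply ln_lt_inv; [exact He | apply Rinv_0_lt_compat; lra|].
    rewrite ln_Rinv by lra. exact Hle.
  - assert (L40 : ln 16 <= ln (40 * (INR n + 1)))
      by (apply ln_le; assert (0 <= INR n) by apply pos_INR; lra).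
    assert (L16 : 0 < ln 16) by (rewrite <- ln_1; apply ln_increasing; lra).
    apply ln_le_inv; [exact Hk' | apply Rmult_lt_0_compat; [apply pow_lt|]; lra|].
    rewrite ln_mult, ln_pow by (try apply pow_lt; lra).
    replace (INR 2) with 2 by (simpl; ring).
    assert (alpha * ln e <= alpha * (- ln 16)) by (apply Rmult_le_compat_l; lra).
    assert (0 <= (alpha - 1) * ln 16) by (apply Rmult_le_pos; lra).
    lra.
Qed.

Section EpsScaling.
Variables (alpha : R) (k T : nat) (e : R).
Hypothesis Ha : 1 <= alpha.
Hypothesis Hk : 0 < INR k.
Hypothesis HT : 0 < INR T.
Hypothesis He : 0 < e.
Hypothesis Hln : (2 + 2 * alpha) * ln e = - (alpha + 1) * ln 16 + ln (INR k) - ln (INR T).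

Lemma bound_prefactor_eq :
  Rpower (INR T) (1 / (alpha + 1)) / Rpower (INR k) (1 + 1 / (alpha + 1)) = / (16 * e ^ 2 * INR k).
Proof.
  assert (P1 := Rpower_pos (INR T) (1 / (alpha + 1))).
  assert (P2 := Rpower_pos (INR k) (1 + 1 / (alpha + 1))).
  assert (P3 : 0 < e ^ 2) by (apply pow_lt; auto).
  apply ln_inv; [apply Rdiv_lt_0_compat; auto | apply Rinv_0_lt_compat; nra|].
  rewrite ln_div, ln_Rinv, !ln_Rpower, !ln_mult, ln_pow by (auto; nra).
  replace (INR 2) with 2 by (simpl; ring).
  replace (ln (INR T)) with (ln (INR k) - (alpha + 1) * ln 16 - (2 + 2 * alpha) * ln e) by lra.
  field. lra.
Qed.

Lemma gap_term_le D : e <= D ->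
  2 / Rpower 16 (alpha + 1) * Rpower D (1 - 2 * alpha) <= 2 * e ^ 4 * INR T / (INR k * D).
Proof.
  intros HD.
  assert (P1 := Rpower_pos 16 (alpha + 1)). assert (P2 := Rpower_pos D (1 - 2 * alpha)).
  assert (P3 : 0 < e ^ 4) by (apply pow_lt; auto).
  assert (P4 : 0 < 2 / Rpower 16 (alpha + 1)) by (apply Rdiv_lt_0_compat; lra).
  assert (P5 : 0 < 2 * e ^ 4 * INR T) by nra.
  assert (P6 : 0 < INR k * D) by nra.
  apply ln_le_inv; [apply Rmult_lt_0_compat; auto | apply Rdiv_lt_0_compat; auto|].
  rewrite ln_mult, !ln_div, !ln_mult, !ln_Rpower, ln_pow by (auto; lra).
    replace (INR 4) with 4 by (simpl; ring).
    replace (ln (INR T)) with (ln (INR k) - (alpha + 1) * ln 16 - (2 + 2 * alpha) * ln e) by lra.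
    assert (ln e <= ln D) by (apply ln_le; auto).
    nra.
Qed.

End EpsScaling.

Lemma gap_term_le_primed alpha g : 1 <= alpha -> / 4 <= g ->
  2 / Rpower 16 (alpha + 1) * Rpower g (1 - 2 * alpha) <= / (128 * g).
Proof.
  intros Ha Hg. assert (P1 := Rpower_pos 16 (alpha + 1)). assert (P2 := Rpower_pos g (1 - 2 * alpha)).
  assert (P3 : 0 < 2 / Rpower 16 (alpha + 1)) by (apply Rdiv_lt_0_compat; lra).
  apply ln_le_inv; [apply Rmult_lt_0_compat; auto | apply Rinv_0_lt_compat; lra|].
  rewrite ln_Rinv, ln_mult, ln_div, !ln_Rpower, ln_mult by (auto; lra).
  assert (E : ln 2 + ln 128 = 2 * ln 16).
  { rewrite <- ln_mult by lra. replace (2 * 128) with (16 * 16) by lra. rewrite ln_mult by lra. ring. }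
  assert (L : 0 <= ln 16 + 2 * ln g).
  { replace (ln 16 + 2 * ln g) with (ln (16 * (g * g))) by (rewrite !ln_mult by nra; ring).
    rewrite <- ln_1. apply ln_le; nra. }
  nra.
Qed.

(** * The hard instances *)

Lemma mu_star_eq n mu i0 : (1 <= i0 <= n)%nat ->
  (forall i, (1 <= i <= n)%nat -> mu i <= mu i0) -> mu_star n mu = mu i0.
Proof.
  intros Hi0 Hall. unfold mu_star. apply Rle_antisym.
  - assert (Hmap : forall x, In x (map mu (seq 1 n)) -> x <= mu i0).
    { intros x Hx. apply in_map_iff in Hx. destruct Hx as [i [<- Hi]].
      apply in_seq in Hi. apply Hall. lia. }
    assert (H1 : mu 1%nat <= mu i0) by (apply Hall; lia). clear Hall.
    induction (map mu (seq 1 n)) as [|x l IH]; simpl; [exact H1|].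
    apply Rmax_lub; [apply Hmap; simpl; auto | apply IH; intros; apply Hmap; simpl; auto].
  - assert (Hin : In (mu i0) (map mu (seq 1 n))) by (apply in_map, in_seq; lia).
    induction (map mu (seq 1 n)) as [|x l IH]; simpl; [destruct Hin|].
    destruct Hin as [<-|Hin]; [apply Rmax_l | eapply Rle_trans; [apply IH, Hin | apply Rmax_r]].
Qed.

Lemma hard_mean_agree n k e j i : i <> j -> hard_mean n k e 1 false i = hard_mean n k e j false i.
Proof.
  intros H. unfold hard_mean. simpl.
  replace (Nat.eqb i j) with false by (symmetry; apply Nat.eqb_neq; auto).
  rewrite andb_false_r. reflexivity.
Qed.

Lemma hard_mean_agree_primed n k e j i : (i <= k)%nat ->
  hard_mean n k e j false i = hard_mean n k e j true i.
Proof.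
  intros H. unfold hard_mean.
  destruct (Nat.leb 2 j && Nat.eqb i j)%bool, (Nat.eqb i 1); auto.
  replace (Nat.leb i k) with true by (symmetry; apply Nat.leb_le; auto). reflexivity.
Qed.

Section HardInstances.
Variables (n k : nat) (e : R).
Hypothesis Hk : (1 <= k)%nat.
Hypothesis Hkn : (k < n)%nat.
Hypothesis He : 0 < e.
Hypothesis Hsmall : e * (INR n + 1) <= / 40.

Lemma hard_mean_cases j pr i : (1 <= j <= k)%nat ->
  (i = j /\ (2 <= j)%nat /\ hard_mean n k e j pr i = / 2 + (INR n + 1) * e) \/
  (i = 1%nat /\ hard_mean n k e j pr i = / 2 + INR n * e) \/
  (i <> j /\ i <> 1%nat /\ (i <= k)%nat /\ hard_mean n k e j pr i = / 2 + (INR n - 1) * e) \/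
  ((k < i)%nat /\ hard_mean n k e j pr i = if pr then 1 else / 2).
Proof.
  intros Hj. unfold hard_mean.
  destruct (Nat.eq_dec i j) as [->|Hij]; [destruct (Nat.eq_dec j 1) as [->|Hj1]|].
  - right; left. simpl. auto.
  - left. replace (Nat.leb 2 j) with true by (symmetry; apply Nat.leb_le; lia).
    rewrite Nat.eqb_refl, S_INR. simpl. repeat split; auto; lia.
  - replace (Nat.eqb i j) with false by (symmetry; apply Nat.eqb_neq; auto).
    rewrite andb_false_r.
    destruct (Nat.eq_dec i 1) as [->|Hi1]; [right; left; auto|].
    replace (Nat.eqb i 1) with false by (symmetry; apply Nat.eqb_neq; auto).
    destruct (le_lt_dec i k) as [Hik|Hik].
    + right; right; left. replace (Nat.leb i k) with true by (symmetry; apply Nat.leb_le; auto).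
      rewrite minus_INR by lia. simpl. auto.
    + right; right; right. replace (Nat.leb i k) with false by (symmetry; apply Nat.leb_gt; auto).
      auto.
Qed.

Let INR_n_ge1 : 1 <= INR n.
Proof. replace 1 with (INR 1) by reflexivity. apply le_INR. lia. Qed.

Lemma hard_mean_open j pr i : (1 <= j <= k)%nat -> (i <= k)%nat ->
  0 < hard_mean n k e j pr i < 1.
Proof.
  intros Hj Hi. assert (Hn := INR_n_ge1).
  destruct (hard_mean_cases j pr i Hj) as [(_&_&->)|[(_&->)|[(_&_&_&->)|(?&_)]]]; try lia; nra.
Qed.

Lemma hard_mean_prob j pr i : (1 <= j <= k)%nat -> 0 <= hard_mean n k e j pr i <= 1.
Proof.
  intros Hj. destruct (le_lt_dec i k) as [Hi|Hi]; [generalize (hard_mean_open j pr i Hj Hi); lra|].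
  destruct (hard_mean_cases j pr i Hj) as [(?&_&_)|[(?&_)|[(_&_&?&_)|(_&->)]]]; try lia.
  destruct pr; lra.
Qed.

Lemma hard_mean_gap j i : (1 <= j <= k)%nat -> i <> j ->
  e <= hard_mean n k e j false j - hard_mean n k e j false i.
Proof.
  intros Hj Hij. assert (Hn := INR_n_ge1).
  destruct (hard_mean_cases j false j Hj) as [(_&_&->)|[(?&->)|[(?&_)|(?&_)]]]; try lia;
  destruct (hard_mean_cases j false i Hj) as [(?&_&_)|[(?&->)|[(_&_&_&->)|(_&->)]]]; try lia; nra.
Qed.

Lemma hard_mean_gap_tail j i : (1 <= j <= k)%nat -> (k < i)%nat ->
  INR n * e <= hard_mean n k e j false j - hard_mean n k e j false i.
Proof.
  intros Hj Hi.
  destruct (hard_mean_cases j false j Hj) as [(_&_&->)|[(?&->)|[(?&_)|(?&_)]]]; try lia;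
  destruct (hard_mean_cases j false i Hj) as [(?&_&_)|[(?&_)|[(_&_&?&_)|(_&->)]]]; try lia; lra.
Qed.

Lemma mu_star_hard j : (1 <= j <= k)%nat ->
  mu_star n (hard_mean n k e j false) = hard_mean n k e j false j.
Proof.
  intros Hj. apply mu_star_eq; [lia|]. intros i _.
  destruct (Nat.eq_dec i j) as [->|Hij]; [lra|].
  generalize (hard_mean_gap j i Hj Hij). lra.
Qed.

Lemma mu_star_hard_primed : mu_star n (hard_mean n k e 1 true) = 1.
Proof.
  assert (Hj : (1 <= 1 <= k)%nat) by lia.
  assert (Hn : hard_mean n k e 1 true n = 1).
  { destruct (hard_mean_cases 1 true n Hj) as [(?&_&_)|[(?&_)|[(_&_&?&_)|(_&->)]]]; auto; lia. }
  rewrite <- Hn. apply mu_star_eq; [lia|]. intros i _. rewrite Hn.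
  apply hard_mean_prob. lia.
Qed.

Lemma hard_mean_primed_gap i : (i <= k)%nat -> 19 / 40 <= 1 - hard_mean n k e 1 true i.
Proof.
  intros Hi. assert (Hn := INR_n_ge1). assert (Hj : (1 <= 1 <= k)%nat) by lia.
  destruct (hard_mean_cases 1 true i Hj) as [(_&?&_)|[(_&->)|[(_&_&_&->)|(?&_)]]]; try lia; nra.
Qed.

End HardInstances.

Lemma sum_gap_pow_scaled_le n mu alpha C b : 0 <= C ->
  (forall i, (1 <= i <= n)%nat -> 0 < gap n mu i -> C * Rpower (gap n mu i) (1 - 2 * alpha) <= b i) ->
  (forall i, 0 <= b i) ->
  C * sum_gap_pow n mu alpha <= lsum (seq 1 n) b.
Proof.
  intros HC Hb Hb0. unfold sum_gap_pow.
  assert (Hin : forall i, In i (seq 1 n) -> (1 <= i <= n)%nat) by (intros i Hi; apply in_seq in Hi; lia).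
  revert Hin. generalize (seq 1 n). intros l Hin. induction l as [|i l IH]; simpl; [lra|].
  rewrite Rmult_plus_distr_l.
  assert (IH' := IH ltac:(intros; apply Hin; simpl; auto)).
  destruct (Rlt_dec 0 (gap n mu i)) as [Hg|Hg]; [|specialize (Hb0 i); lra].
  assert (C * Rpower (gap n mu i) (1 - 2 * alpha) <= b i) by (apply Hb; auto; apply Hin; simpl; auto).
  lra.
Qed.

Lemma kl_shifted_means c e : 0 < e -> 0 <= c -> (c + 2) * e <= / 40 ->
  kl (/ 2 + c * e) (/ 2 + (c + 2) * e) <= 17 * e ^ 2.
Proof.
  intros He Hc Hsmall.
  assert (Hx : 0 <= (c + 2) * e) by nra.
  assert (Hq : 0.24 <= (/ 2 + (c + 2) * e) * (1 - (/ 2 + (c + 2) * e))).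
  { set (x := (c + 2) * e) in *. assert (x * x <= / 40 * / 40) by (apply Rmult_le_compat; lra). nra. }
  eapply Rle_trans; [apply kl_le_chi2; nra|].
  replace ((/ 2 + c * e - (/ 2 + (c + 2) * e)) ^ 2) with (4 * e ^ 2) by ring.
  apply Rle_trans with (4 * e ^ 2 / 0.24); [|nra].
  unfold Rdiv. apply Rmult_le_compat_l; [nra|]. apply Rinv_le_contravar; lra.
Qed.

Definition regret_bound (alpha : R) (n m k T : nat) (mu : nat -> R) : R :=
  2 / Rpower 16 (alpha + 1)
  * (INR (k - m + 1) * Rpower (INR T) (1 / (alpha + 1)) / Rpower (INR k) (1 + 1 / (alpha + 1)))
  * sum_gap_pow n mu alpha.

Section LowerBound.
Variables (alpha : R) (n m k : nat) (A : algorithm) (T : nat) (e : R).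
Hypothesis Ha : 1 <= alpha.
Hypothesis Hm : (2 <= m)%nat.
Hypothesis Hmk : (m <= k)%nat.
Hypothesis Hkn : (k < n)%nat.
Hypothesis HA : is_streaming_alg n m A.
Hypothesis HT : (0 < T)%nat.
Hypothesis He : 0 < e.
Hypothesis Hln : (2 + 2 * alpha) * ln e = - (alpha + 1) * ln 16 + ln (INR k) - ln (INR T).
Hypothesis Hsmall : e * (INR n + 1) <= / 40.
Hypothesis HeT : INR k <= e ^ 2 * INR T.

Let K : R := INR (k - m + 1).
Let C : R := 2 / Rpower 16 (alpha + 1).
Let mu0 : nat -> R := hard_mean n k e 1 false.
Let pulls_before_stop : R := stopped_exp A T mu0 k (fun _ => 1) (fun _ _ => 0) 0 T [].
Let lost_prob (mu : nat -> R) (j : nat) : R :=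
  stopped_exp A T mu k (fun _ => 0) (lost_early T j) 0 T [].
Let pulls (j : nat) : R := stopped_exp A T mu0 k (pull_count j) (fun _ _ => 0) 0 T [].

Let Hk : 0 < INR k. Proof. apply lt_0_INR. lia. Qed.
Let HT' : 0 < INR T. Proof. apply lt_0_INR. lia. Qed.
Let HK : 1 <= K <= INR k.
Proof. unfold K. split; [replace 1 with (INR 1) by reflexivity|]; apply le_INR; lia. Qed.
Let He2 : 0 < e ^ 2. Proof. apply pow_lt. exact He. Qed.
Let Hmu0 : probs_upto mu0 k.
Proof. intros i Hi. generalize (hard_mean_open n k e ltac:(lia) Hkn He Hsmall 1 false i ltac:(lia) Hi). unfold mu0. lra. Qed.

Lemma regret_bound_eq mu :
  regret_bound alpha n m k T mu = K / (16 * e ^ 2 * INR k) * (C * sum_gap_pow n mu alpha).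
Proof.
  unfold regret_bound. fold K C.
  replace (K * Rpower (INR T) (1 / (alpha + 1)) / Rpower (INR k) (1 + 1 / (alpha + 1)))
    with (K * (Rpower (INR T) (1 / (alpha + 1)) / Rpower (INR k) (1 + 1 / (alpha + 1))))
    by (unfold Rdiv; ring).
  rewrite (bound_prefactor_eq alpha k T e Ha Hk He Hln). unfold Rdiv. ring.
Qed.

Lemma sum_gap_pow_primed_le : C * sum_gap_pow n (hard_mean n k e 1 true) alpha <= INR k / 60.
Proof.
  replace (INR k / 60) with (INR k * / 60 + INR (n - k) * 0) by (unfold Rdiv; ring).
  rewrite <- (lsum_split_at k n) by lia.
  apply sum_gap_pow_scaled_le; [unfold C; apply Rlt_le, Rdiv_lt_0_compat; [lra|apply Rpower_pos]| |].
  - intros i Hi Hgap. unfold gap in *. rewrite mu_star_hard_primed in * by (auto; lia).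
    destruct (le_lt_dec i k) as [Hik|Hik].
    + replace (Nat.leb i k) with true by (symmetry; apply Nat.leb_le; auto).
      assert (G := hard_mean_primed_gap n k e ltac:(lia) Hkn He Hsmall i Hik).
      eapply Rle_trans; [apply gap_term_le_primed; lra|].
      apply Rinv_le_contravar; lra.
    + exfalso. unfold hard_mean in Hgap.
      replace (Nat.eqb i 1) with false in Hgap by (symmetry; apply Nat.eqb_neq; lia).
      replace (Nat.leb i k) with false in Hgap by (symmetry; apply Nat.leb_gt; lia).
      simpl in Hgap. lra.
  - intros i. destruct (Nat.leb i k); lra.
Qed.

Lemma regret_primed_gt : K / (400 * e ^ 2) < pulls_before_stop ->
  regret_bound alpha n m k T (hard_mean n k e 1 true) < exp_regret n A T (hard_mean n k e 1 true).
Proof.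
  intros Hpulls.
  assert (Hprob : forall i, 0 <= hard_mean n k e 1 true i <= 1 /\ hard_mean n k e 1 true i <= 1).
  { intros i. generalize (hard_mean_prob n k e ltac:(lia) Hkn He Hsmall 1 true i ltac:(lia)). lra. }
  assert (Hreg : 19 / 40 * pulls_before_stop <= exp_regret n A T (hard_mean n k e 1 true)).
  { unfold exp_regret. rewrite mu_star_hard_primed by (auto; lia).
    eapply Rle_trans; [|apply (exp_regret_from_ge_pull_cost n m A T HA _ 1 Hprob k (19 / 40));
      [|constructor]].
    - right. unfold pulls_before_stop. rewrite <- stopped_exp_scal.
      rewrite (stopped_exp_ext_means A T mu0 (hard_mean n k e 1 true))
        by (intros; apply hard_mean_agree_primed; auto).
      apply stopped_exp_ext; intros; ring.
    - intros i Hi. generalize (hard_mean_primed_gap n k e ltac:(lia) Hkn He Hsmall i Hi). lra. }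
  rewrite regret_bound_eq.
  apply Rle_lt_trans with (K / (16 * e ^ 2 * INR k) * (INR k / 60)).
  - apply Rmult_le_compat_l; [apply Rlt_le, Rdiv_lt_0_compat; nra | exact sum_gap_pow_primed_le].
  - replace (K / (16 * e ^ 2 * INR k) * (INR k / 60)) with (K / (400 * e ^ 2) * (5 / 12))
      by (field; lra).
    assert (0 < K / (400 * e ^ 2)) by (apply Rdiv_lt_0_compat; lra).
    lra.
Qed.

Lemma late_stop_small : pulls_before_stop <= K / (400 * e ^ 2) ->
  stopped_exp A T mu0 k (fun _ => 0) (fun s _ => if Nat.leb T (2 * s) then 0 else 1) 1 T [] <= / 200.
Proof.
  intros Hpulls.
  set (Q := stopped_exp A T mu0 k (fun _ => 0) (fun s _ => if Nat.leb T (2 * s) then 0 else 1) 1 T []).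
  assert (HQ : 0 <= Q).
  { apply (stopped_exp_range A T n m HA mu0 k _ 1 0 1); auto; [|lra|constructor].
    intros s a. destruct (Nat.leb T (2 * s)); lra. }
  assert (HM : INR T / 2 * Q <= pulls_before_stop) by (apply (stopped_exp_markov A T n m HA); auto; constructor).
  assert (Hk400 : K / (400 * e ^ 2) <= INR T / 400).
  { apply Rmult_le_reg_r with (400 * e ^ 2); [lra|].
    replace (K / (400 * e ^ 2) * (400 * e ^ 2)) with K by (field; lra). nra. }
  nra.
Qed.

Lemma sum_lost_prob_ge : pulls_before_stop <= K / (400 * e ^ 2) ->
  K * (199 / 200) <= lsum (seq 1 k) (lost_prob mu0).
Proof.
  intros Hpulls.
  set (P := stopped_exp A T mu0 k (fun _ => 0) (fun s _ => if Nat.leb T (2 * s) then 1 else 0) 0 T []).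
  assert (HPQ := stopped_exp_complement A T n m HA mu0 k (fun s => Nat.leb T (2 * s)) T [] (hv_nil n m)).
  assert (HQ := late_stop_small Hpulls). cbv beta in HPQ. fold P in HPQ.
  assert (HKP : K * P <= lsum (seq 1 k) (lost_prob mu0)).
  { unfold P. rewrite <- stopped_exp_scal_payoff.
    rewrite (stopped_exp_ext A T mu0 k _ (fun _ => 0) _
      (fun s a => if Nat.ltb k (act_pull a) then K * (if Nat.leb T (2 * s) then 1 else 0) else 0) _ 0);
      [| reflexivity | | reflexivity]; cycle 1.
    { intros s a _ Hka. apply Nat.ltb_lt in Hka. rewrite Hka. reflexivity. }
    unfold lost_prob. rewrite <- (stopped_exp_sum A T n m HA) by constructor.
    apply (stopped_exp_mono A T n m HA); auto; [| |rewrite lsum_const; lra|constructor].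
    - intros. rewrite lsum_const. lra.
    - intros s a st Hv. destruct (Nat.ltb k (act_pull a)) eqn:Ek.
      + apply Nat.ltb_lt in Ek. exact (lsum_lost_early_ge n m k st a T s Hv Ek Hmk).
      + transitivity (lsum (seq 1 k) (fun _ => 0)); [rewrite lsum_const; lra|].
        apply lsum_le. intros j _. unfold lost_early.
        destruct (in_dec Nat.eq_dec j (act_mem a)), (Nat.leb T (2 * s)); lra. }
  nra.
Qed.

Lemma lost_prob_01 mu j : probs_upto mu k -> 0 <= lost_prob mu j <= 1.
Proof.
  intros Hmu. apply (stopped_exp_range A T n m HA); auto; [|lra|constructor].
  intros s a. unfold lost_early. destruct (in_dec Nat.eq_dec j (act_mem a)), (Nat.leb T (2 * s)); lra.
Qed.

Lemma pulls_nonneg j : 0 <= pulls j.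
Proof.
  transitivity (stopped_exp A T mu0 k (fun _ => 0) (fun _ _ => 0) 0 T []).
  - right. symmetry. apply (stopped_exp_const A T n m HA). constructor.
  - apply (stopped_exp_mono A T n m HA); auto; [|intros; lra|lra|constructor].
    intros a st _. unfold pull_count. destruct (Nat.eqb (act_pull a) j); lra.
Qed.

(** Change of measure from [nu_1] to [nu_j]: the two instances differ only
    at arm [j], whose divergence is [O(e^2)] per pull. *)
Lemma lost_prob_change_of_measure j : (2 <= j <= k)%nat ->
  3 / 4 * lost_prob mu0 j - 16 / 15 * (/ (16 * INR k) / 4 + 68 * e ^ 2 * pulls j)
  <= lost_prob (hard_mean n k e j false) j.
Proof.
  intros Hj. set (eta := / (16 * INR k)). set (muj := hard_mean n k e j false).
  assert (Hk2 : 2 <= INR k) by (replace 2 with (INR 2) by (simpl; ring); apply le_INR; lia).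
  assert (Heta : 0 < eta <= / 32) by (unfold eta; split; [apply Rinv_0_lt_compat | apply Rinv_le_contravar]; lra).
  assert (Hopen : forall j', (1 <= j' <= k)%nat -> forall i, (i <= k)%nat -> 0 < hard_mean n k e j' false i < 1)
    by (intros; apply hard_mean_open; auto; lia).
  assert (Hmuj : probs_upto muj k) by (intros i Hi; generalize (Hopen j ltac:(lia) i Hi); unfold muj; lra).
  set (g := fun s a => eta + (1 - 2 * eta) * lost_early T j s a).
  assert (Hg : forall s a, eta <= g s a <= 1 - eta).
  { intros s a. unfold g, lost_early.
    destruct (in_dec Nat.eq_dec j (act_mem a)), (Nat.leb T (2 * s)); lra. }
  assert (KL := stopped_exp_kl_le n m A T HA mu0 muj k j
    ltac:(intros i Hi; apply hard_mean_agree; auto)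
    ltac:(intros i Hi; split; [apply (Hopen 1%nat) | apply (Hopen j)]; auto; lia)
    eta g eta (proj1 Heta) Hg ltac:(lra) T [] (hv_nil n m)).
  unfold g in KL. rewrite !(stopped_exp_affine A T n m HA) in KL by constructor.
  assert (Hdiv : kl (mu0 j) (muj j) <= 17 * e ^ 2).
  { unfold mu0, muj. destruct (hard_mean_cases n k e ltac:(lia) Hkn 1 false j ltac:(lia)) as [(?&?&_)|[(?&_)|[(_&_&_&->)|(?&_)]]]; try lia.
    destruct (hard_mean_cases n k e ltac:(lia) Hkn j false j ltac:(lia)) as [(_&_&->)|[(?&_)|[(?&_)|(?&_)]]]; try lia.
    replace (INR n + 1) with ((INR n - 1) + 2) by ring.
    assert (1 <= INR n) by (replace 1 with (INR 1) by reflexivity; apply le_INR; lia).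
    apply kl_shifted_means; lra. }
  assert (HN := pulls_nonneg j).
  replace (68 * e ^ 2 * pulls j) with (4 * (17 * e ^ 2 * pulls j)) by ring.
  apply (prob_lower_from_kl eta _ _ (17 * e ^ 2 * pulls j) Heta); [apply lost_prob_01; auto.. |].
  eapply Rle_trans; [exact KL|]. apply Rmult_le_compat_r; auto.
Qed.

Lemma sum_pulls_le : lsum (seq 2 (k - 1)) pulls <= pulls_before_stop.
Proof.
  unfold pulls. rewrite <- (stopped_exp_sum A T n m HA mu0 k _ pull_count (fun _ _ _ => 0) (fun _ => 0))
    by constructor.
  apply (stopped_exp_mono A T n m HA); auto; [| |rewrite lsum_const; lra|constructor].
  - intros a st _. apply lsum_pull_count_le1, seq_NoDup.
  - intros. rewrite lsum_const. lra.
Qed.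

Lemma exists_often_lost_arm : pulls_before_stop <= K / (400 * e ^ 2) ->
  exists j, (1 <= j <= k)%nat /\ 3 * K / (8 * INR k) < lost_prob (hard_mean n k e j false) j.
Proof.
  intros Hpulls.
  assert (Hseq : seq 1 k = 1%nat :: seq 2 (k - 1)) by (destruct k; [lia|]; simpl; rewrite Nat.sub_0_r; reflexivity).
  assert (Hlost := sum_lost_prob_ge Hpulls). rewrite Hseq in Hlost. simpl lsum in Hlost.
  assert (Hshift : lsum (seq 2 (k - 1)) (fun j => 3 / 4 * lost_prob mu0 j
      + (- (16 / 15) * (/ (16 * INR k) / 4) + - (16 / 15 * 68 * e ^ 2) * pulls j))
    <= lsum (seq 2 (k - 1)) (fun j => lost_prob (hard_mean n k e j false) j)).
  { apply lsum_le. intros j Hj. apply in_seq in Hj.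
    generalize (lost_prob_change_of_measure j ltac:(lia)). lra. }
  rewrite !lsum_add, !lsum_scal, lsum_const, length_seq in Hshift.
  assert (Hsp : e ^ 2 * lsum (seq 2 (k - 1)) pulls <= K / 400).
  { apply Rle_trans with (e ^ 2 * pulls_before_stop); [apply Rmult_le_compat_l; [lra | apply sum_pulls_le]|].
    apply Rmult_le_compat_l with (r := e ^ 2) in Hpulls; [|lra].
    replace (e ^ 2 * (K / (400 * e ^ 2))) with (K / 400) in Hpulls by (field; lra). exact Hpulls. }
  assert (Heta : INR (k - 1) * (/ (16 * INR k) / 4) <= / 64).
  { rewrite minus_INR by lia. simpl. apply Rmult_le_reg_r with (64 * INR k); [lra|].
    field_simplify; lra. }
  assert (Hf : 0 <= lsum (seq 2 (k - 1)) (lost_prob mu0)).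
  { transitivity (lsum (seq 2 (k - 1)) (fun _ => 0)); [rewrite lsum_const; lra|].
    apply lsum_le. intros. apply lost_prob_01. exact Hmu0. }
  assert (Hf1 := lost_prob_01 mu0 1 Hmu0).
  destruct (lsum_exists_gt (seq 1 k) (fun j => lost_prob (hard_mean n k e j false) j) (3 * K / (8 * INR k)))
    as [j [Hj Hp]].
  - rewrite length_seq. replace (3 * K / (8 * INR k) * INR k) with (3 * K / 8) by (field; lra).
    rewrite Hseq. simpl lsum. fold mu0. lra.
  - apply in_seq in Hj. exists j. split; [lia | exact Hp].
Qed.

Lemma sum_gap_pow_unprimed_le j : (1 <= j <= k)%nat ->
  C * sum_gap_pow n (hard_mean n k e j false) alpha <= 3 * e ^ 3 * INR T.
Proof.
  intros Hj. set (mu := hard_mean n k e j false).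
  assert (Hk2 : 2 <= INR k) by (replace 2 with (INR 2) by (simpl; ring); apply le_INR; lia).
  assert (Hn : INR k + 1 <= INR n) by (rewrite <- S_INR; apply le_INR; lia).
  assert (Hstar : mu_star n mu = mu j) by (apply mu_star_hard; auto; lia).
  assert (Hgap : forall i, i <> j -> e <= mu j - mu i) by (intros; apply hard_mean_gap; auto; lia).
  assert (Hnum : 0 < 2 * e ^ 4 * INR T) by (assert (0 < e ^ 4) by (apply pow_lt; lra); nra).
  set (bh := 2 * e ^ 4 * INR T / (INR k * e)).
  set (bt := 2 * e ^ 4 * INR T / (INR k * (INR n * e))).
  assert (Hbh : 0 < bh) by (unfold bh; apply Rdiv_lt_0_compat; nra).
  assert (Hbt : bt = bh / INR n) by (unfold bt, bh; field; lra).
  apply Rle_trans with (INR k * bh + INR (n - k) * bt).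
  - rewrite <- (lsum_split_at k n) by lia.
    apply sum_gap_pow_scaled_le; [unfold C; apply Rlt_le, Rdiv_lt_0_compat; [lra|apply Rpower_pos]| |].
    + intros i Hi Hpos. unfold gap in *. rewrite Hstar in *.
      destruct (Nat.eq_dec i j) as [->|Hij]; [lra|].
      eapply Rle_trans; [exact (gap_term_le alpha k T e Ha Hk HT' He Hln _ (Hgap i Hij))|].
      destruct (le_lt_dec i k) as [Hik|Hik].
      * replace (Nat.leb i k) with true by (symmetry; apply Nat.leb_le; auto).
        unfold bh, Rdiv. apply Rmult_le_compat_l; [lra|].
        apply Rinv_le_contravar; [nra|]. apply Rmult_le_compat_l; [lra | apply Hgap; auto].
      * replace (Nat.leb i k) with false by (symmetry; apply Nat.leb_gt; auto).
        assert (Htail : INR n * e <= mu j - mu i) by (apply hard_mean_gap_tail; auto; lia).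
        unfold bt, Rdiv. apply Rmult_le_compat_l; [lra|].
        apply Rinv_le_contravar; [apply Rmult_lt_0_compat; nra|]. apply Rmult_le_compat_l; lra.
    + intros i. rewrite Hbt. destruct (Nat.leb i k); [lra|].
      apply Rlt_le, Rdiv_lt_0_compat; lra.
  - rewrite Hbt, minus_INR by lia.
    replace (3 * e ^ 3 * INR T) with (3 / 2 * (INR k * bh)) by (unfold bh; field; lra).
    assert ((INR n - INR k) * (bh / INR n) <= bh).
    { apply Rmult_le_reg_r with (INR n); [lra|]. field_simplify; nra. }
    nra.
Qed.

Lemma regret_unprimed_gt j : (1 <= j <= k)%nat ->
  3 * K / (8 * INR k) < lost_prob (hard_mean n k e j false) j ->
  regret_bound alpha n m k T (hard_mean n k e j false) < exp_regret n A T (hard_mean n k e j false).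
Proof.
  intros Hj Hp. set (mu := hard_mean n k e j false) in *.
  assert (Hstar : mu_star n mu = mu j) by (apply mu_star_hard; auto; lia).
  assert (Hgap : forall i, i <> j -> e <= mu j - mu i) by (intros; apply hard_mean_gap; auto; lia).
  assert (Hmu : forall i, 0 <= mu i <= 1 /\ mu i <= mu j).
  { intros i. split; [apply hard_mean_prob; auto; lia|].
    destruct (Nat.eq_dec i j) as [->|Hij]; [lra|]. generalize (Hgap i Hij). lra. }
  assert (Hreg : e * (INR T / 2) * lost_prob mu j <= exp_regret n A T mu).
  { unfold exp_regret. rewrite Hstar.
    eapply Rle_trans; [|apply (exp_regret_from_ge_lost_early n m A T HA mu (mu j) Hmu j e
      ltac:(lra) Hgap k T []); [lia|constructor]].
    right. unfold lost_prob. rewrite <- stopped_exp_scal_payoff. reflexivity. }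
  rewrite regret_bound_eq.
  apply Rle_lt_trans with (K / (16 * e ^ 2 * INR k) * (3 * e ^ 3 * INR T)).
  - apply Rmult_le_compat_l; [apply Rlt_le, Rdiv_lt_0_compat; nra | exact (sum_gap_pow_unprimed_le j Hj)].
  - replace (K / (16 * e ^ 2 * INR k) * (3 * e ^ 3 * INR T))
      with (e * (INR T / 2) * (3 * K / (8 * INR k))) by (field; lra).
    apply Rlt_le_trans with (e * (INR T / 2) * lost_prob mu j); [|exact Hreg].
    apply Rmult_lt_compat_l; [nra | exact Hp].
Qed.

Lemma exists_hard_instance : exists (j : nat) (primed : bool), (1 <= j <= k)%nat /\
  exp_regret n A T (hard_mean n k e j primed) > regret_bound alpha n m k T (hard_mean n k e j primed).
Proof.
  destruct (Rlt_le_dec (K / (400 * e ^ 2)) pulls_before_stop) as [Hmany|Hfew].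
  - exists 1%nat, true. split; [lia | exact (regret_primed_gt Hmany)].
  - destruct (exists_often_lost_arm Hfew) as [j [Hj Hp]].
    exists j, false. split; [exact Hj | exact (regret_unprimed_gt j Hj Hp)].
Qed.

End LowerBound.

Theorem theorem4p1 (alpha : R) (n m k : nat) (A : algorithm) :
  1 <= alpha -> (2 <= m)%nat -> (m <= k)%nat -> (k < n)%nat ->
  is_streaming_alg n m A ->
  exists T0 : nat, forall T : nat, (T0 <= T)%nat ->
    exists (j : nat) (primed : bool),
      (1 <= j <= k)%nat /\
      exp_regret n A T (hard_mean n k (eps k T alpha) j primed) >
        2 / Rpower 16 (alpha + 1)
        * (INR (k - m + 1) * Rpower (INR T) (1 / (alpha + 1))
           / Rpower (INR k) (1 + 1 / (alpha + 1)))
        * sum_gap_pow n (hard_mean n k (eps k T alpha) j primed) alpha.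
Proof.
  intros Ha Hm Hmk Hkn HA.
  destruct (eps_small_for_large_T alpha n k Ha ltac:(lia)) as [T0 HT0].
  exists T0. intros T HT. destruct (HT0 T HT) as (HTpos & Hsmall & HeT).
  apply exists_hard_instance; auto.
  - apply eps_pos.
  - apply eps_ln; auto; [lia | lra].
Qed.
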